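(* Consider a finite MDP $(\mathcal{S},\mathcal{A},P,r)$ with $r:\mathcal{S}\times\mathcal{A}\to[0,1]$ and discount factor $\gamma\in[0,1)$. Let $U,U'\in\mathbb{R}^{\mathcal{S}}$ satisfy $U\ge U'\ge V^*$ and, for all $s\in\mathcal{S}$ and $a\in\mathcal{A}$, $U(s)\ge r(s,a)+\gamma P_{s,a}U$ and $U'(s)\ge r(s,a)+\gamma P_{s,a}U'$. Let $\theta=\|U-V^*\|_\infty$. Then for every stationary policy $\pi$ and every $\tilde s\in\mathcal{S}$, \[ \sum_{s,a}\tilde d_\gamma^{\pi}(s,a\mid\tilde s)\,\mathbb{V}(P_{s,a},U-U')\ \le\ 4\theta^2+2\theta\big(V^*(\tilde s)-V^{\pi}(\tilde s)\big). \]
   Context: $P_{s,a}\in\Delta^{\mathcal{S}}$ is the transition distribution from $(s,a)$ and $P_{s,a}V=\sum_{s'}P(s'|s,a)V(s')$. For $p\in\Delta^{\mathcal{S}}$ and $x\in\mathbb{R}^{\mathcal{S}}$, $\mathbb{V}(p,x)=\sum_{s}p(s)x(s)^2-(\sum_s p(s)x(s))^2$. $V^*$ is the optimal $\gamma$-discounted value function, $V^{\pi}(\tilde s)=\mathbb{E}_\pi[\sum_{t\ge1}\gamma^{t-1}r(s_t,a_t)\mid s_1=\tilde s]$, and $\tilde d_\gamma^{\pi}(s,a\mid\tilde s)=\mathbb{E}_\pi\big[\sum_{t=1}^\infty\gamma^{t-1}\mathbb{I}[(s_t,a_t)=(s,a)]\mid s_1=\tilde s\big]$ with $a_t\sim\pi(\cdot|s_t)$,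 $s_{t+1}\sim P_{s_t,a_t}$. *)

From HB Require Import structures.
From mathcomp Require Import all_boot all_order all_algebra.
From mathcomp Require Import all_classical all_reals all_analysis.
Set Implicit Arguments. Unset Strict Implicit. Unset Printing Implicit Defensive.
Import Order.TTheory GRing.Theory Num.Theory.
Local Open Scope classical_set_scope.
Local Open Scope ring_scope.

Section MDP.
Variables (R : realType) (S A : finType).

(* P s a s' = P(s' | s, a) *)
Definition is_transition (P : S -> A -> S -> R) : Prop :=
  forall s a, (forall s', 0 <= P s a s') /\ \sum_(s' : S) P s a s' = 1.

(* a stationary (possibly randomized) policy: pi s a = pi(a | s) *)
Definition is_policy (pi : S -> A -> R) : Prop :=
  forall s, (forall a, 0 <= pi s a) /\ \sum_(a : A) pi s a = 1.

Definition PV (P : S -> A -> S -> R) (s : S) (a : A) (V : S -> R) : R :=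
  \sum_(s' : S) P s a s' * V s'.

Definition mdp_variance (p : S -> R) (x : S -> R) : R :=
  \sum_(s : S) p s * x s ^+ 2 - (\sum_(s : S) p s * x s) ^+ 2.

(* state distribution at step t+1 (t = 0 is s_1 = s0) under pi *)
Fixpoint state_dist (P : S -> A -> S -> R) (pi : S -> A -> R) (s0 : S)
  (t : nat) : S -> R :=
  match t with
  | 0 => fun s => if s == s0 then 1 else 0
  | t'.+1 => fun s' => \sum_(s : S) \sum_(a : A)
       state_dist P pi s0 t' s * pi s a * P s a s'
  end.

(* d~_gamma^pi(s, a | s0) = sum_{t>=1} gamma^{t-1} Pr[(s_t,a_t) = (s,a)] *)
Definition occupancy (P : S -> A -> S -> R) (pi : S -> A -> R) (gamma : R)
  (s0 : S) (s : S) (a : A) : R :=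
  limn (fun n => \sum_(0 <= t < n) gamma ^+ t * (state_dist P pi s0 t s * pi s a)).

(* V^pi(s0) = E_pi[ sum_{t>=1} gamma^{t-1} r(s_t,a_t) | s_1 = s0 ] *)
Definition Vpi (P : S -> A -> S -> R) (r : S -> A -> R) (gamma : R)
  (pi : S -> A -> R) (s0 : S) : R :=
  limn (fun n => \sum_(0 <= t < n) gamma ^+ t *
     (\sum_(s : S) \sum_(a : A) state_dist P pi s0 t s * pi s a * r s a)).

Definition Vstar (P : S -> A -> S -> R) (r : S -> A -> R) (gamma : R)
  (s0 : S) : R :=
  sup [set x | exists pi, is_policy pi /\ x = Vpi P r gamma pi s0].

Definition supnorm (V : S -> R) : R := \big[Num.max/0]_(s : S) `|V s|.

End MDP.

(* Write D = U - U' (called gap below), so 0 <= D <= theta = ||U - V*||_oo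
   because V* <= U' <= U.  For every
   state-action pair the Bellman super-solution properties of U and U' give
   the pointwise estimate
     Var(P_{s,a}, D) <= P_{s,a} D^2 - D(s)^2 + 2 theta (U(s) - r(s,a) - gamma P_{s,a} U),
   because D(s)^2 - (P_{s,a} D)^2 factors as a difference bounded by the
   Bellman gap U(s) - r - gamma P_{s,a} U times a sum bounded by 2 theta.
   Averaging over the time-t state-action distribution of pi and summing
   with weights gamma^t, the D^2 terms and the U terms telescope, leaving for
   every horizon n the bound theta^2 + 2 theta (U(s0) + gamma^n ||U|| - Vpi_n)
   where Vpi_n is the n-step discounted return. *)
From HB Require Import structures.
From mathcomp Require Import all_boot all_order all_algebra.
From mathcomp Require Import all_classical all_reals all_analysis.
From mathcomp Require Import lra.
Import Order.TTheory GRing.Theory Num.Theory.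
Local Open Scope classical_set_scope.
Local Open Scope ring_scope.

Set Implicit Arguments. Unset Strict Implicit.

Lemma convex_comb_bound (R : numDomainType) (T : finType) (w g : T -> R) c d :
  (forall x, 0 <= w x) -> \sum_x w x = 1 -> (forall x, c <= g x <= d) ->
  c <= \sum_x w x * g x <= d.
Proof.
move=> w_ge0 w_sum g_bnd; apply/andP; split.
- rewrite -[leLHS]mul1r -w_sum mulr_suml; apply: ler_sum => x _.
  by apply: ler_wpM2l => //; case/andP: (g_bnd x).
- rewrite -[leRHS]mul1r -w_sum mulr_suml; apply: ler_sum => x _.
  by apply: ler_wpM2l => //; case/andP: (g_bnd x).
Qed.

Lemma weight_le1 (R : numDomainType) (T : finType) (w : T -> R) :
  (forall y, 0 <= w y) -> \sum_y w y = 1 -> forall x, w x <= 1.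
Proof. by move=> w_ge0 <- x; rewrite (bigD1 x) //= lerDl sumr_ge0. Qed.

Lemma supnorm_ge0 (R : realType) (S : finType) (f : S -> R) : 0 <= supnorm f.
Proof. by rewrite /supnorm; elim/big_ind: _ => // x y hx hy; rewrite le_max hx. Qed.

Lemma supnorm_ge_norm (R : realType) (S : finType) (f : S -> R) s :
  `|f s| <= supnorm f.
Proof. by rewrite /supnorm (bigD1 s) //= le_max lexx. Qed.

Section Transition.
Variables (R : realType) (S A : finType) (P : S -> A -> S -> R).

Lemma PV_sub s a (f g : S -> R) :
  PV P s a (fun s' => f s' - g s') = PV P s a f - PV P s a g.
Proof. by rewrite /PV -sumrB; apply: eq_bigr => s' _; rewrite mulrBr. Qed.

Hypothesis HP : is_transition P.

Lemma PV_bound s a (g : S -> R) c d :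
  (forall s', c <= g s' <= d) -> c <= PV P s a g <= d.
Proof. exact: convex_comb_bound (HP s a).1 (HP s a).2. Qed.

End Transition.

Section StateDistribution.
Variables (R : realType) (S A : finType) (P : S -> A -> S -> R)
  (pi : S -> A -> R) (s0 : S).
Hypothesis HP : is_transition P.
Hypothesis Hpi : is_policy pi.
Local Notation mu := (state_dist P pi s0).

Definition expect t (f : S -> A -> R) : R :=
  \sum_s \sum_a mu t s * pi s a * f s a.
Definition state_mean t (g : S -> R) : R := \sum_s mu t s * g s.

Lemma state_dist_ge0 t s : 0 <= mu t s.
Proof.
elim: t s => [|t IH] s /=; first by case: ifP.
apply: sumr_ge0 => x _; apply: sumr_ge0 => a _.
by rewrite !mulr_ge0 //; [exact: (Hpi x).1 | exact: (HP x a).1].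
Qed.

Lemma state_mean_init g : state_mean 0 g = g s0.
Proof.
rewrite /state_mean (bigD1 s0) //= eqxx mul1r big1 ?addr0 // => s /negbTE h.
by rewrite h mul0r.
Qed.

Lemma expectE t f :
  expect t f = state_mean t (fun s => \sum_a pi s a * f s a).
Proof.
apply: eq_bigr => s _; rewrite mulr_sumr.
by apply: eq_bigr => a _; rewrite mulrA.
Qed.

Lemma state_mean_expect t g : state_mean t g = expect t (fun s _ => g s).
Proof.
rewrite expectE; apply: eq_bigr => s _.
by rewrite -mulr_suml (Hpi s).2 mul1r.
Qed.

Lemma state_mean_succ t g : state_mean t.+1 g = expect t (fun s a => PV P s a g).
Proof.
rewrite /state_mean /=.
under eq_bigr do rewrite mulr_suml.
rewrite exchange_big /=; apply: eq_bigr => s _.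
under eq_bigr do rewrite mulr_suml.
rewrite exchange_big /=; apply: eq_bigr => a _.
by rewrite /PV mulr_sumr; apply: eq_bigr => s' _; rewrite mulrA.
Qed.

Lemma state_dist_sum1 t : \sum_s mu t s = 1.
Proof.
have mass t' : \sum_s mu t' s = state_mean t' (fun _ => 1).
  by apply: eq_bigr => s _; rewrite mulr1.
elim: t => [|t IH]; rewrite mass ?state_mean_init //.
rewrite state_mean_succ -[RHS]IH mass state_mean_expect.
apply: eq_bigr => s _; apply: eq_bigr => a _; congr (_ * _).
by rewrite /PV -[RHS](HP s a).2; apply: eq_bigr => s' _; rewrite mulr1.
Qed.

Lemma state_dist_le1 t s : mu t s <= 1.
Proof. exact: weight_le1 (state_dist_ge0 t) (state_dist_sum1 t) s. Qed.

Lemma state_mean_bound t g c d :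
  (forall s, c <= g s <= d) -> c <= state_mean t g <= d.
Proof. exact: convex_comb_bound (state_dist_ge0 t) (state_dist_sum1 t). Qed.

Lemma expect_bound t f c d :
  (forall s a, c <= f s a <= d) -> c <= expect t f <= d.
Proof.
move=> f_bnd; rewrite expectE; apply: state_mean_bound => s.
exact: convex_comb_bound (Hpi s).1 (Hpi s).2 (f_bnd s).
Qed.

Lemma expect_le t f g : (forall s a, f s a <= g s a) -> expect t f <= expect t g.
Proof.
move=> fg; apply: ler_sum => s _; apply: ler_sum => a _; apply: ler_wpM2l => //.
by apply: mulr_ge0; [exact: state_dist_ge0 | exact: (Hpi s).1].
Qed.

Lemma expectD t f g :
  expect t (fun s a => f s a + g s a) = expect t f + expect t g.
Proof.
rewrite /expect -big_split; apply: eq_bigr => s _; rewrite -big_split.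
by apply: eq_bigr => a _; rewrite mulrDr.
Qed.

Lemma expectB t f g :
  expect t (fun s a => f s a - g s a) = expect t f - expect t g.
Proof.
rewrite /expect -sumrB; apply: eq_bigr => s _; rewrite -sumrB.
by apply: eq_bigr => a _; rewrite mulrBr.
Qed.

Lemma expectZ t c f : expect t (fun s a => c * f s a) = c * expect t f.
Proof.
rewrite /expect mulr_sumr; apply: eq_bigr => s _; rewrite mulr_sumr.
by apply: eq_bigr => a _; rewrite mulrCA.
Qed.

End StateDistribution.

Section Telescoping.
Variables (R : realType) (S A : finType) (P : S -> A -> S -> R)
  (r : S -> A -> R) (gamma : R) (U U' Vs : S -> R) (pi : S -> A -> R) (s0 : S).
Hypothesis HP : is_transition P.
Hypothesis Hpi : is_policy pi.
Hypothesis Hgamma : 0 <= gamma < 1.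
Hypothesis HUU' : forall s, U' s <= U s.
Hypothesis HU'V : forall s, Vs s <= U' s.
Hypothesis HUb : forall s a, r s a + gamma * PV P s a U <= U s.
Hypothesis HU'b : forall s a, r s a + gamma * PV P s a U' <= U' s.

(* Vs stands for V*; only the bound Vs <= U' is used. *)
Let theta := supnorm (fun s => U s - Vs s).
Let gap s := U s - U' s.

Lemma gap_bound s : 0 <= gap s <= theta.
Proof.
have := le_trans (ler_norm _) (supnorm_ge_norm (fun s => U s - Vs s) s).
by rewrite /gap /theta /= subr_ge0 HUU' /=; have := HU'V s; lra.
Qed.

(* The pointwise estimate: Var(P_{s,a}, D) = P_{s,a} D^2 - (P_{s,a} D)^2
   exceeds P_{s,a} D^2 - D(s)^2 by at most 2 theta times the Bellman gap of U,
   since D(s)^2 - (P_{s,a} D)^2 = (D(s) - P_{s,a} D) (D(s) + P_{s,a} D). *)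
Lemma variance_step s a :
  mdp_variance (P s a) gap <=
  PV P s a (fun s' => gap s' ^+ 2) - gap s ^+ 2
  + 2 * theta * (U s - r s a - gamma * PV P s a U).
Proof.
have -> : mdp_variance (P s a) gap =
  PV P s a (fun s' => gap s' ^+ 2) - PV P s a gap ^+ 2 by [].
have [y0 y_le] : 0 <= PV P s a gap /\ PV P s a gap <= theta.
  by apply/andP; apply: PV_bound gap_bound.
have [x0 x_le] : 0 <= gap s /\ gap s <= theta by apply/andP; exact: gap_bound.
(* D(s) - P_{s,a} D is at most the Bellman gap of U, since U' is a super-solution. *)
have gap_drop : gap s - PV P s a gap <= U s - r s a - gamma * PV P s a U.
  rewrite /gap [PV _ _ _ gap]PV_sub in y0 *.
  have contraction : 0 <= (1 - gamma) * (PV P s a U - PV P s a U').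
    by apply: mulr_ge0 => //; case/andP: Hgamma => _; rewrite subr_ge0 => /ltW.
  have := HU'b s a; lra.
have bellman_gap0 : 0 <= U s - r s a - gamma * PV P s a U by have := HUb s a; lra.
set x := gap s in x0 x_le gap_drop *; set y := PV P s a gap in y0 y_le gap_drop *.
nra.
Qed.

Local Notation E := (expect P pi s0).
Local Notation M := (state_mean P pi s0).
Let variance s a := mdp_variance (P s a) gap.

Lemma gap_sq_mean t : 0 <= M t (fun s => gap s ^+ 2) <= theta ^+ 2.
Proof.
apply: (state_mean_bound s0 HP Hpi) => s; have /andP[g0 g_le] := gap_bound s.
by rewrite sqr_ge0 /= ler_pXn2r // ?nnegrE // (le_trans g0 g_le).
Qed.

Lemma expect_variance_step t :
  E t variance <= M t.+1 (fun s => gap s ^+ 2) - M t (fun s => gap s ^+ 2)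
                  + 2 * theta * (M t U - E t r - gamma * M t.+1 U).
Proof.
apply: le_trans (expect_le s0 HP Hpi t variance_step) _.
rewrite expectD expectB expectZ !expectB expectZ.
by rewrite !state_mean_succ !(state_mean_expect P s0 Hpi).
Qed.

Lemma discounted_variance_telescope n :
  \sum_(0 <= t < n) gamma ^+ t * E t variance <=
  (1 - gamma ^+ n) * theta ^+ 2 + gamma ^+ n * M n (fun s => gap s ^+ 2)
  + 2 * theta * (U s0 - gamma ^+ n * M n U - \sum_(0 <= t < n) gamma ^+ t * E t r).
Proof.
have [g0 g1] := andP Hgamma.
elim: n => [|n IH].
  rewrite !big_geq // expr0 !state_mean_init.
  by have := sqr_ge0 (gap s0); lra.
rewrite !big_nat_recr //=.
have gn0 : 0 <= gamma ^+ n by apply: exprn_ge0.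
have step := ler_wpM2l gn0 (expect_variance_step n).
have [_ An1] := andP (gap_sq_mean n.+1).
have discount_gain : 0 <= gamma ^+ n * (1 - gamma) *
                          (theta ^+ 2 - M n.+1 (fun s => gap s ^+ 2)).
  by rewrite !mulr_ge0 // subr_ge0 // ltW.
rewrite exprS.
move: IH step discount_gain An1.
set g := gamma ^+ n; set An := M n _; set An1 := M n.+1 _.
set Bn := M n U; set Bn1 := M n.+1 U; set Er := E n r; set EV := E n variance.
nra.
Qed.

Lemma discounted_variance_bound n :
  \sum_(0 <= t < n) gamma ^+ t * E t variance <=
  theta ^+ 2 + 2 * theta * (U s0 + gamma ^+ n * supnorm U
                            - \sum_(0 <= t < n) gamma ^+ t * E t r).
Proof.
apply: le_trans (discounted_variance_telescope n) _.
have [g0 g1] := andP Hgamma.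
have gn0 : 0 <= gamma ^+ n by apply: exprn_ge0.
have gn1 : gamma ^+ n <= 1 by apply: exprn_ile1 => //; apply: ltW.
have [_ An] := andP (gap_sq_mean n).
have [Bn _] : - supnorm U <= M n U /\ M n U <= supnorm U.
  apply/andP; apply: (state_mean_bound s0 HP Hpi) => s.
  by rewrite -ler_norml supnorm_ge_norm.
have theta0 : 0 <= theta := supnorm_ge0 _.
have tail_sq : 0 <= gamma ^+ n * (theta ^+ 2 - M n (fun s => gap s ^+ 2)).
  by rewrite mulr_ge0 // subr_ge0.
have tail_U : 0 <= theta * (gamma ^+ n * (M n U + supnorm U)).
  by rewrite !mulr_ge0 // -lerBlDr sub0r.
lra.
Qed.

End Telescoping.

(* Discounted sums of [0,1]-valued sequences converge, by comparison with
   the geometric series. *)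
Lemma discounted_series_cvg (R : realType) (gamma : R) (u : nat -> R) :
  0 <= gamma < 1 -> (forall t, 0 <= u t <= 1) ->
  cvgn (fun n => \sum_(0 <= t < n) gamma ^+ t * u t).
Proof.
move=> /andP[g0 g1] u_bnd.
apply: (@series_le_cvg _ _ (geometric 1 gamma)) => [t|t|t|].
- by case/andP: (u_bnd t) => u0 _; rewrite mulr_ge0 ?exprn_ge0.
- by rewrite /= mul1r exprn_ge0.
- by case/andP: (u_bnd t) => u0 u1; rewrite /= mul1r ler_piMr ?exprn_ge0.
- by apply: is_cvg_geometric_series; rewrite ger0_norm.
Qed.

Section Occupancy.
Variables (R : realType) (S A : finType) (P : S -> A -> S -> R)
  (pi : S -> A -> R) (gamma : R) (s0 : S).
Hypothesis HP : is_transition P.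
Hypothesis Hpi : is_policy pi.
Hypothesis Hgamma : 0 <= gamma < 1.
Local Notation E := (expect P pi s0).

Lemma discounted_expect_exchange n (f : S -> A -> R) :
  \sum_(0 <= t < n) gamma ^+ t * E t f =
  \sum_s \sum_a (\sum_(0 <= t < n) gamma ^+ t * (state_dist P pi s0 t s * pi s a))
                * f s a.
Proof.
under eq_bigr do rewrite mulr_sumr.
rewrite exchange_big /=; apply: eq_bigr => s _.
under eq_bigr do rewrite mulr_sumr.
rewrite exchange_big /=; apply: eq_bigr => a _.
by rewrite mulr_suml; apply: eq_bigr => t _; rewrite !mulrA.
Qed.

Lemma occupancy_weighted_cvg (f : S -> A -> R) :
  (fun n => \sum_(0 <= t < n) gamma ^+ t * E t f) @ \oo -->
  \sum_s \sum_a occupancy P pi gamma s0 s a * f s a.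
Proof.
under eq_fun do rewrite discounted_expect_exchange.
apply: cvg_big => [|s _]; first exact: add_continuous.
apply: cvg_big => [|a _]; first exact: add_continuous.
apply: cvgMr_tmp; apply: discounted_series_cvg => // t.
have mu0 := state_dist_ge0 s0 HP Hpi t s; have mu1 := state_dist_le1 s0 HP Hpi t s.
have pi0 := (Hpi s).1 a; have pi1 := weight_le1 (Hpi s).1 (Hpi s).2 a.
by rewrite mulr_ge0 //= mulr_ile1.
Qed.

Lemma Vpi_cvg (r : S -> A -> R) : (forall s a, 0 <= r s a <= 1) ->
  (fun n => \sum_(0 <= t < n) gamma ^+ t * E t r) @ \oo --> (Vpi P r gamma pi s0 : R^o).
Proof.
move=> r_bnd; apply: discounted_series_cvg => // t.
exact: expect_bound.
Qed.

End Occupancy.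

Theorem mainTheorem6 (R : realType) (S A : finType)
  (P : S -> A -> S -> R) (r : S -> A -> R) (gamma : R)
  (HP : is_transition P)
  (Hr : forall s a, 0 <= r s a <= 1)
  (Hgamma : 0 <= gamma < 1)
  (U U' : S -> R)
  (HUU' : forall s, U' s <= U s)
  (HU'V : forall s, Vstar P r gamma s <= U' s)
  (HUb : forall s a, r s a + gamma * PV P s a U <= U s)
  (HU'b : forall s a, r s a + gamma * PV P s a U' <= U' s)
  (pi : S -> A -> R) (Hpi : is_policy pi) (s0 : S) :
  let theta := supnorm (fun s => U s - Vstar P r gamma s) in
  \sum_(s : S) \sum_(a : A)
     occupancy P pi gamma s0 s a * mdp_variance (P s a) (fun s' => U s' - U' s')
  <= 4 * theta ^+ 2
     + 2 * theta * (Vstar P r gamma s0 - Vpi P r gamma pi s0).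
Proof.
cbv zeta; set theta := supnorm _; have [g0 g1] := andP Hgamma.
have rhs_cvg : (fun n => theta ^+ 2 + 2 * theta * (U s0 + gamma ^+ n * supnorm U
      - \sum_(0 <= t < n) gamma ^+ t * expect P pi s0 t r)) @ \oo -->
    theta ^+ 2 + 2 * theta * (U s0 + 0 * supnorm U - Vpi P r gamma pi s0).
  apply: cvgD; first exact: cvg_cst.
  apply: cvgMl_tmp; apply: cvgB; last exact: (Vpi_cvg (s0:=s0) HP Hpi Hgamma Hr).
  apply: cvgD; first exact: cvg_cst.
  by apply: cvgMr_tmp; apply: cvg_expr; rewrite ger0_norm.
have lhs_cvg := occupancy_weighted_cvg (s0:=s0) HP Hpi Hgamma
  (f := fun s a => mdp_variance (P s a) (fun s' => U s' - U' s')).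
have U_near_Vstar : U s0 <= theta + Vstar P r gamma s0.
  have := le_trans (ler_norm _) (supnorm_ge_norm (fun s => U s - Vstar P r gamma s) s0).
  by rewrite -/theta; lra.
have theta0 : 0 <= theta := supnorm_ge0 _.
apply: le_trans (ler_cvg_to lhs_cvg rhs_cvg
  (nearW _ (discounted_variance_bound s0 HP Hpi Hgamma HUU' HU'V HUb HU'b))) _.
rewrite mul0r addr0.
by have := mulr_ge0 theta0 theta0; nra.
Qed.
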